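(* Let $(X^{(t)})_{t \in \mathbb{N}}$ be a sequence of real-valued random variables with bounded range, and let $(Y^{(t)})_{t \in \mathbb{N}}$ be a sequence of real-valued random variables that are zero-mean, range-bounded, and independent and identically distributed. Suppose the sequences $(X^{(t)})_{t \in \mathbb{N}}$ and $(Y^{(t)})_{t \in \mathbb{N}}$ are independent of each other. Define $Z^{(t)} \coloneqq X^{(t)} Y^{(t)}$. Then \[ \lim_{k \to \infty} \frac{1}{k+1}\sum_{t=0}^{k} Z^{(t)} = 0 \quad \text{almost surely.} \]
   Context: All random variables are defined on a common probability space. ''Bounded range'' means the random variables take values in a bounded subset of $\mathbb{R}$. *)

From HB Require Import structures.
From mathcomp Require Import all_boot all_order all_algebra.
From mathcomp Require Import all_classical all_reals all_analysis.
Set Implicit Arguments. Unset Strict Implicit. Unset Printing Implicit Defensive.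
Import Order.TTheory GRing.Theory Num.Theory.
Import numFieldNormedType.Exports.
Local Open Scope classical_set_scope.
Local Open Scope ring_scope.

Definition mutually_independent d (T : measurableType d) (R : realType)
  (P : probability T R) (X : nat -> T -> R) : Prop :=
  forall (s : seq nat) (B : nat -> set R),
    uniq s -> (forall i, measurable (B i)) ->
    P (\big[setI/setT]_(i <- s) (X i @^-1` B i)) =
    (\prod_(i <- s) P (X i @^-1` B i))%E.

Definition identically_distributed d (T : measurableType d) (R : realType)
  (P : probability T R) (X : nat -> T -> R) : Prop :=
  forall (t : nat) (B : set R), measurable B ->
    P (X t @^-1` B) = P (X 0%N @^-1` B).

(* the sequences X and Y are independent of each other: every finite-dimensional
   event of X is independent of every finite-dimensional event of Y
   (i.e. sigma(X t, t in N) and sigma(Y t, t in N) are independent) *)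
Definition independent_seqs d (T : measurableType d) (R : realType)
  (P : probability T R) (X Y : nat -> T -> R) : Prop :=
  forall (s1 s2 : seq nat) (B C : nat -> set R),
    (forall i, measurable (B i)) -> (forall i, measurable (C i)) ->
    let EX := \big[setI/setT]_(i <- s1) (X i @^-1` B i) in
    let EY := \big[setI/setT]_(j <- s2) (Y j @^-1` C j) in
    P (EX `&` EY) = (P EX * P EY)%E.

From HB Require Import structures.
From mathcomp Require Import all_boot all_order all_algebra.
From mathcomp Require Import all_classical all_reals all_analysis.
From mathcomp Require Import measurable_realfun.
From mathcomp Require Import ring lra zify.
Set Implicit Arguments. Unset Strict Implicit. Unset Printing Implicit Defensive.
Import Order.TTheory GRing.Theory Num.Theory.
Import numFieldNormedType.Exports.
Local Open Scope classical_set_scope.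
Local Open Scope ring_scope.

(* Let M bound every |X t| and |Y t|, and write Z t = X t * Y t and
   S n = Z 0 + ... + Z (n - 1).  For s <> t the cross moment E[Z s * Z t]
   vanishes because Y t is centred and independent of (X s, X t, Y s).  The
   hypotheses only give independence of events, so these three bounded variables
   are replaced by step functions of mesh 1/(n+1): the product then expands into
   indicators of rectangles, each independent of Y t, and the approximation error
   vanishes as n grows.  Hence E[(S n)^2] <= n M^4, and Chebyshev's inequality
   bounds P(|S (k^2)| > k^2 / j) by M^4 j^2 / k^2, which is summable in k; by
   Borel-Cantelli, S (k^2) / k^2 -> 0 almost surely.  As the increments of S are
   bounded by M^2, this forces S n / n -> 0. *)

Lemma normr_le_harmonic_eq0 (R : realType) (x C : R) :
  (forall n, `|x| <= C / n.+1%:R) -> x = 0.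
Proof.
move=> hx; apply/normr0_eq0/eqP; rewrite eq_le normr_ge0 andbT.
have hC : (fun n => C * harmonic n) @ \oo --> 0.
  by rewrite -(mulr0 C); apply: cvgMr; exact: cvg_harmonic.
rewrite -(cvg_lim _ hC)//; apply: limr_ge; first exact: cvgP hC.
by apply: nearW => n; exact: hx.
Qed.

Lemma exists_sqrtn (n : nat) : exists r, (r ^ 2 <= n < r.+1 ^ 2)%N.
Proof.
elim: n => [|n [r /andP[lo hi]]]; first by exists 0%N.
have [hi'|hi'] := ltnP n.+1 (r.+1 ^ 2); first by exists r; rewrite hi' andbT; lia.
by exists r.+1; apply/andP; split; nia.
Qed.

Lemma normr_sub_le_increments (R : numDomainType) (K : R) (s : nat -> R) :
  (forall n, `|s n.+1 - s n| <= K) ->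
  forall n m, (n <= m)%N -> `|s m - s n| <= K *+ (m - n).
Proof.
move=> hK n m nm; rewrite -telescope_sumr// -sumr_const_nat.
by apply: le_trans (ler_norm_sum _ _ _) _; exact: ler_sum.
Qed.

Lemma cvg_mean_from_squares (R : realType) (K : R) (s : nat -> R) :
  (forall n, `|s n.+1 - s n| <= K) ->
  (fun k => (k.+1 ^ 2)%:R^-1 * s (k.+1 ^ 2)%N) @ \oo --> 0 ->
  (fun k => k.+1%:R^-1 * s k.+1) @ \oo --> 0.
Proof.
move=> hK /cvgrPdist_le hsq; apply/cvgrPdist_le => e e0.
have K0 : 0 <= K := le_trans (normr_ge0 _) (hK 0%N).
have [N1 _ hN1] := hsq (e / 2) (divr_gt0 e0 (ltr0n _ 2)).
have [N2 _ hN2] := nbhs_infty_gtr (4 * K / e).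
exists ((maxn N1 N2).+1 ^ 2)%N => // k /= hk.
(* With r.+1 ^ 2 <= k.+1 < r.+2 ^ 2, the hypothesis controls s (r.+1 ^ 2), and
   the at most 2 r.+1 remaining increments cost at most 2 K r.+1. *)
have [[|r] /andP[lo hi]] := exists_sqrtn k.+1; first by lia.
have : ((maxn N1 N2).+1 ^ 2 < r.+2 ^ 2)%N by lia.
rewrite ltn_exp2r// ltnS gtn_max => /andP[N1r N2r].
set x : R := k.+1%:R; set y : R := r.+1%:R; set a := s (r.+1 ^ 2)%N; set b := s k.+1.
have y0 : 0 < y by rewrite ltr0n.
have yx : y ^+ 2 <= x by rewrite -natrX ler_nat.
have ha : `|a| <= y ^+ 2 * (e / 2).
  have := hN1 r N1r; rewrite sub0r normrN normrM ger0_norm ?invr_ge0// natrX.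
  by rewrite ler_pdivrMl ?exprn_gt0.
have Ky : 4 * K < y * e by rewrite -ltr_pdivrMr//; exact: hN2 r.+1 (ltnW N2r).
have hba : `|b - a| <= K * (2 * y).
  rewrite (le_trans (normr_sub_le_increments hK lo))// -[K *+ _]mulr_natr.
  by rewrite ler_wpM2l// -natrM ler_nat; lia.
have : `|b| <= `|a| + `|b - a| by rewrite (le_trans _ (ler_normD _ _))// addrC subrK.
rewrite sub0r normrN normrM ger0_norm ?invr_ge0// ler_pdivrMl ?ltr0n//.
nra.
Qed.

Lemma normr_mul3B_le (R : realDomainType) (x y z x' y' z' M e : R) :
  `|x| <= M -> `|y| <= M -> `|z| <= M -> `|x'| <= M -> `|y'| <= M ->
  `|x - x'| <= e -> `|y - y'| <= e -> `|z - z'| <= e ->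
  `|x * y * z - x' * y' * z'| <= 3 * (M * M * e).
Proof.
move=> xM yM zM x'M y'M xe ye ze.
have M0 : 0 <= M := le_trans (normr_ge0 _) xM.
have e0 : 0 <= e := le_trans (normr_ge0 _) xe.
have -> : x * y * z - x' * y' * z' =
          (x - x') * y * z + x' * (y - y') * z + x' * y' * (z - z') by ring.
have t1 : `|(x - x') * y * z| <= M * M * e.
  by rewrite !normrM [M * M * e]mulrC mulrA ler_pM ?ler_pM// ?mulr_ge0.
have t2 : `|x' * (y - y') * z| <= M * M * e.
  by rewrite !normrM [M * M * e]mulrAC ler_pM ?ler_pM// ?mulr_ge0.
have t3 : `|x' * y' * (z - z')| <= M * M * e.
  by rewrite !normrM ler_pM ?ler_pM// ?mulr_ge0.
rewrite (le_trans (ler_normD _ _))// (le_trans (lerD (ler_normD _ _) (lexx _)))//.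
by rewrite mulr_natl mulrS mulr2n addrA !lerD.
Qed.

Lemma sum_inv_sqr_le (R : realFieldType) n :
  \sum_(k < n) (k.+1 ^ 2)%:R^-1 <= 2 - 2 / n.+1%:R :> R.
Proof.
elim: n => [|n IH]; first by rewrite big_ord0 divr1 subrr.
rewrite big_ord_recr /= (le_trans (lerD IH (lexx _)))// -addrA lerD2l.
rewrite natrX -[n.+2]addn1 -[n.+1]addn1 !natrD.
set x : R := n%:R.
have x0 : 0 <= x := ler0n R n.
rewrite -subr_ge0.
have -> : - (2 / (x + 1 + 1)) - (- (2 / (x + 1)) + ((x + 1) ^+ 2)^-1) =
          x / ((x + 1) ^+ 2 * (x + 1 + 1)).
  by field; rewrite !paddr_eq0 ?oner_eq0 ?andbF//; lra.
by rewrite divr_ge0// mulr_ge0 ?exprn_ge0 ?addr_ge0.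
Qed.

Lemma nneseries_inv_sqr_lty (R : realType) (C : R) : 0 <= C ->
  (\sum_(k <oo) (C / (k.+1 ^ 2)%:R)%:E < +oo)%E.
Proof.
move=> C0; apply: (@le_lt_trans _ _ (2 * C)%:E); last exact: ltry.
apply: lime_le; first by apply: is_cvg_ereal_nneg_natsum => n _; rewrite lee_fin divr_ge0.
apply: nearW => n; rewrite sumEFin lee_fin -mulr_sumr mulrC ler_wpM2r//.
rewrite big_mkord (le_trans (sum_inv_sqr_le _ n))// gerDl oppr_le0 divr_ge0//.
Qed.

Section bounded_expectation.
Context d (T : measurableType d) (R : realType) (P : probability T R).

Definition bounded_measurable (f : T -> R) :=
  measurable_fun setT f /\ exists M : R, forall x, `|f x| <= M.

Lemma bounded_measurable_Lfun1 f : bounded_measurable f -> f \in Lfun P 1.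
Proof.
move=> [mf [M hM]]; apply/Lfun1_integrable.
apply: measurable_bounded_integrable => //; first by rewrite ltey_eq fin_num_measure.
exists M; split; first by rewrite num_real.
by move=> M' MM' x _ /=; rewrite (le_trans (hM x))// ltW.
Qed.

Lemma bounded_measurable_cst c : bounded_measurable (cst c).
Proof. by split => //; exists `|c|. Qed.

Lemma bounded_measurable_indic A : measurable A -> bounded_measurable (\1_A).
Proof.
move=> mA; split; first exact: measurable_indic.
by exists 1 => x; rewrite indicE; case: (_ \in _); rewrite ?normr1 ?normr0.
Qed.

Lemma bounded_measurableD f g :
  bounded_measurable f -> bounded_measurable g -> bounded_measurable (fun x => f x + g x).
Proof.
move=> [mf [M hM]] [mg [N hN]]; split; first exact: measurable_funD.
by exists (M + N) => x; rewrite (le_trans (ler_normD _ _))// lerD.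
Qed.

Lemma bounded_measurableN f : bounded_measurable f -> bounded_measurable (fun x => - f x).
Proof.
move=> [mf [M hM]]; split; first exact: measurableT_comp.
by exists M => x; rewrite normrN.
Qed.

Lemma bounded_measurableB f g : bounded_measurable f -> bounded_measurable g ->
  bounded_measurable (fun x => f x - g x).
Proof. by move=> bf bg; apply: bounded_measurableD bf (bounded_measurableN bg). Qed.

Lemma bounded_measurableM f g :
  bounded_measurable f -> bounded_measurable g -> bounded_measurable (fun x => f x * g x).
Proof.
move=> [mf [M hM]] [mg [N hN]]; split; first exact: measurable_funM.
by exists (M * N) => x; rewrite normrM ler_pM.
Qed.

Lemma bounded_measurable_sum (I : Type) (s : seq I) (F : I -> T -> R) :
  (forall i, bounded_measurable (F i)) ->
  bounded_measurable (fun x => \sum_(i <- s) F i x).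
Proof.
move=> hF; elim: s => [|i s IH].
  by under eq_fun do rewrite big_nil; exact: bounded_measurable_cst.
by under eq_fun do rewrite big_cons; exact: bounded_measurableD.
Qed.

Lemma bounded_measurable_lt_nat f : bounded_measurable f ->
  exists N : nat, forall x, `|f x| < N%:R.
Proof.
move=> [_ [M hM]]; have [N _ hN] := nbhs_infty_gtr M.
by exists N => x; exact: le_lt_trans (hM x) (hN N (leqnn N)).
Qed.

(* [fine] would turn an infinite expectation into 0; every lemma below assumes
   [f] bounded and measurable, so that ['E_P[f]] is finite. *)
Definition Er (f : T -> R) : R := fine ('E_P[f])%E.

Lemma ErE f : bounded_measurable f -> ('E_P[f] = (Er f)%:E)%E.
Proof. by move=> /bounded_measurable_Lfun1/expectation_fin_num/fineK. Qed.

Lemma eq_Er f g : f =1 g -> Er f = Er g.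
Proof. by move=> /funext ->. Qed.

Lemma Er_cst c : Er (cst c) = c.
Proof. by rewrite /Er expectation_cst. Qed.

Lemma Er_indic A : measurable A -> Er (\1_A) = fine (P A).
Proof. by move=> mA; rewrite /Er expectation_indic. Qed.

Lemma ErD f g : bounded_measurable f -> bounded_measurable g ->
  Er (fun x => f x + g x) = Er f + Er g.
Proof.
move=> bf bg.
by rewrite /Er expectationD ?bounded_measurable_Lfun1// (ErE bf) (ErE bg).
Qed.

Lemma ErZl k f : bounded_measurable f -> Er (fun x => k * f x) = k * Er f.
Proof.
move=> bf; rewrite (eq_Er (g := k \o* f)) => [|x]; last exact: mulrC.
by rewrite /Er expectationZl ?bounded_measurable_Lfun1// (ErE bf).
Qed.

Lemma ErN f : bounded_measurable f -> Er (fun x => - f x) = - Er f.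
Proof. by move=> bf; rewrite -mulN1r -ErZl//; apply: eq_Er => x; rewrite /= mulN1r. Qed.

Lemma ErB f g : bounded_measurable f -> bounded_measurable g ->
  Er (fun x => f x - g x) = Er f - Er g.
Proof.
by move=> bf bg; rewrite -ErN// -ErD//; exact: bounded_measurableN.
Qed.

Lemma Er_sum (I : Type) (s : seq I) (F : I -> T -> R) :
  (forall i, bounded_measurable (F i)) ->
  Er (fun x => \sum_(i <- s) F i x) = \sum_(i <- s) Er (F i).
Proof.
move=> bF; elim: s => [|i s IH].
  by under eq_fun do rewrite big_nil; rewrite big_nil Er_cst.
under eq_fun do rewrite big_cons.
by rewrite ErD ?IH ?big_cons//; exact: bounded_measurable_sum.
Qed.

Lemma ler_Er f g : bounded_measurable f -> bounded_measurable g ->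
  (forall x, f x <= g x) -> Er f <= Er g.
Proof.
move=> bf bg fg; rewrite -subr_ge0 -ErB// /Er fine_ge0// expectation_ge0// => x.
by rewrite subr_ge0.
Qed.

Lemma normr_Er_le f c : bounded_measurable f -> (forall x, `|f x| <= c) ->
  `|Er f| <= c.
Proof.
move=> bf fc; have bc := bounded_measurable_cst c.
apply/ler_normlP; rewrite -ErN// -[c]Er_cst; split.
- apply: ler_Er => // [|x]; first exact: bounded_measurableN.
  by have /ler_normlP[] := fc x.
- by apply: ler_Er => // x; have /ler_normlP[] := fc x.
Qed.

Lemma measurable_normr_gt (f : T -> R) (c : R) : measurable_fun setT f ->
  measurable [set x | c < `|f x|].
Proof.
move=> mf; rewrite -[X in measurable X]setTI.
have -> : [set x | c < `|f x|] = (Num.norm \o f) @^-1` `]c, +oo[.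
  by apply/seteqP; split => x /=; rewrite in_itv /= andbT.
by apply: measurableT_comp.
Qed.

Lemma normr_ErB_le f g e : bounded_measurable f -> bounded_measurable g ->
  (forall x, `|f x - g x| <= e) -> `|Er f - Er g| <= e.
Proof.
by move=> bf bg fge; rewrite -ErB//; apply: normr_Er_le => //; exact: bounded_measurableB.
Qed.

Lemma Er_indicI A B : measurable A -> measurable B ->
  Er (fun x => \1_A x * \1_B x) = fine (P (A `&` B)).
Proof. by move=> mA mB; rewrite -Er_indic ?indicI//; exact: measurableI. Qed.

Lemma Er_sqr_tail f c : bounded_measurable f -> 0 < c ->
  fine (P [set x | c < `|f x|]) * c ^+ 2 <= Er (fun x => f x ^+ 2).
Proof.
move=> bf c0.
have mA := measurable_normr_gt c bf.1.
rewrite mulrC -Er_indic// -ErZl; last exact: bounded_measurable_indic.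
apply: ler_Er.
- by apply: bounded_measurableM (bounded_measurable_cst _) (bounded_measurable_indic mA).
- exact: bounded_measurableM.
move=> x; rewrite indicE /=; case: (boolP (x \in _)) => [/set_mem /= fxc|_].
  by rewrite mulr1 -[f x ^+ 2]real_normK ?num_real//; nra.
by rewrite mulr0 sqr_ge0.
Qed.

End bounded_expectation.

Section discretization.
Context d (T : measurableType d) (R : realType).
Implicit Types (n N i : nat) (V : T -> R).

Definition grid n N i : R := i%:R / n.+1%:R - N%:R.

Definition cell n N i : set R := [set x | grid n N i <= x < grid n N i.+1].

(* Rounding [V] down to the grid, written as a combination of indicators so
   that its expectations reduce to probabilities of the events [V @^-1` B]. *)
Definition discretize n N V w : R :=
  \sum_(i < 2 * N * n.+1) grid n N i * \1_(V @^-1` cell n N i) w.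

Lemma gridS n N i : grid n N i.+1 = grid n N i + n.+1%:R^-1.
Proof. by rewrite /grid -addn1 natrD mulrDl mul1r addrAC. Qed.

Lemma ler_grid n N : {homo grid n N : i j / (i <= j)%N >-> i <= j}.
Proof. by move=> i j ij; rewrite lerD2r ler_pM2r ?invr_gt0 ?ltr0n// ler_nat. Qed.

Lemma grid0 n N : grid n N 0 = - N%:R.
Proof. by rewrite /grid mul0r sub0r. Qed.

Lemma grid_last n N : grid n N (2 * N * n.+1) = N%:R.
Proof. by rewrite /grid natrM mulfK ?pnatr_eq0// natrM mulr_natl mulr2n addrK. Qed.

Lemma measurable_cell n N i : measurable (cell n N i).
Proof.
have -> : cell n N i = [set` `[grid n N i, grid n N i.+1[] .
  by apply/seteqP; split => x /=; rewrite in_itv.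
exact: measurable_itv.
Qed.

Lemma cell_cover n N (x : R) : `|x| < N%:R ->
  exists2 i, (i < 2 * N * n.+1)%N & cell n N i x.
Proof.
rewrite ltr_norml -(grid0 n N) -(grid_last n N) => /andP[/ltW].
elim: (2 * N * n.+1)%N => [/le_lt_trans/[apply]|L IH lo hi]; first by rewrite ltxx.
have [xL|Lx] := ltP x (grid n N L); last by exists L => //; rewrite /cell /= Lx.
by have [i iL ix] := IH lo xL; exists i => //; exact: ltnW.
Qed.

Lemma cell_uniq n N i j (x : R) : cell n N i x -> cell n N j x -> i = j.
Proof.
move=> /andP[ix xi] /andP[jx xj]; apply/eqP; rewrite eqn_leq.
apply/andP; split; rewrite leqNgt; apply/negP => /(ler_grid n N) h.
- by have := lt_le_trans xj (le_trans h ix); rewrite ltxx.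
- by have := lt_le_trans xi (le_trans h jx); rewrite ltxx.
Qed.

Lemma discretizeE n N V w : `|V w| < N%:R ->
  exists2 i, cell n N i (V w) & discretize n N V w = grid n N i.
Proof.
move=> /(cell_cover n) [i iL Vi]; exists i => //.
rewrite /discretize (bigD1 (Ordinal iL)) //= big1 ?addr0.
  by rewrite indicE mem_set// mulr1.
move=> j /eqP ji; rewrite indicE memNset ?mulr0// => Vj.
by apply: ji; apply/val_inj; exact: cell_uniq Vj Vi.
Qed.

Lemma discretize_err n N V w : `|V w| < N%:R ->
  `|discretize n N V w - V w| <= n.+1%:R^-1.
Proof.
move=> /(discretizeE n) [i /andP[lo hi] ->]; rewrite gridS in hi.
by rewrite ler0_norm ?subr_le0// opprB lerBlDl ltW.
Qed.

Lemma discretize_bound n N V w : `|V w| < N%:R -> `|discretize n N V w| <= N%:R.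
Proof.
move=> VN; have [i /andP[lo _] ->] := discretizeE n VN.
have /ltr_normlP[_ NV] := VN.
by rewrite ler_norml -(grid0 n N) ler_grid//= ltW// (le_lt_trans lo).
Qed.

Lemma measurable_preimage_cell n N i V : measurable_fun setT V ->
  measurable (V @^-1` cell n N i).
Proof.
by move=> mV; rewrite -[X in measurable X]setTI; apply: mV => //; exact: measurable_cell.
Qed.

Lemma bounded_measurable_discretize n N V : measurable_fun setT V ->
  bounded_measurable (discretize n N V).
Proof.
move=> mV; apply: bounded_measurable_sum => i.
apply: bounded_measurableM; first exact: bounded_measurable_cst.
by apply: bounded_measurable_indic; exact: measurable_preimage_cell.
Qed.

End discretization.

Arguments grid {R} n N i.
Arguments cell {R} n N i.

Section independence.
Context d (T : measurableType d) (R : realType) (P : probability T R).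

Lemma Er_discretize_mul n N (V r : T -> R) :
  measurable_fun setT V -> bounded_measurable r ->
  Er P (fun w => discretize n N V w * r w) =
  \sum_(i < 2 * N * n.+1) grid n N i * Er P (fun w => \1_(V @^-1` cell n N i) w * r w).
Proof.
move=> mV br; have bi i : bounded_measurable (fun w => \1_(V @^-1` cell n N i) w * r w).
  apply: bounded_measurableM => //.
  exact/bounded_measurable_indic/measurable_preimage_cell.
under eq_Er do rewrite /discretize mulr_suml.
rewrite Er_sum => [|i].
  by apply: eq_bigr => i _; under eq_Er do rewrite -mulrA; rewrite ErZl.
under eq_fun do rewrite -mulrA.
by apply: bounded_measurableM; first exact: bounded_measurable_cst.
Qed.

Lemma Er_discretize_mul_eq0 n N (V r : T -> R) :
  measurable_fun setT V -> bounded_measurable r ->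
  (forall i, Er P (fun w => \1_(V @^-1` cell n N i) w * r w) = 0) ->
  Er P (fun w => discretize n N V w * r w) = 0.
Proof. by move=> mV br r0; rewrite Er_discretize_mul// big1// => i _; rewrite r0 mulr0. Qed.

Lemma Er_indic_mul_indep (E : set T) (W : T -> R) :
  measurable E -> bounded_measurable W ->
  (forall C, measurable C -> P (E `&` W @^-1` C) = (P E * P (W @^-1` C))%E) ->
  Er P (fun w => \1_E w * W w) = fine (P E) * Er P W.
Proof.
move=> mE bW EW; have [N WN] := bounded_measurable_lt_nat bW; have mW := bW.1.
have bE : bounded_measurable (\1_E : T -> R) by exact: bounded_measurable_indic.
have /andP[PE0 PE1] : 0 <= fine (P E) <= 1.
  by rewrite fine_ge0// -lee_fin fineK ?fin_num_measure// probability_le1.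
(* The identity holds exactly for the step functions of [W], which are
   [1/(n+1)]-close to [W]. *)
apply/eqP; rewrite -subr_eq0; apply/eqP/(@normr_le_harmonic_eq0 _ _ 2) => n.
pose q := discretize n N W; have bq := bounded_measurable_discretize n N mW.
have Eq : Er P (fun w => \1_E w * q w) = fine (P E) * Er P q.
  have -> : Er P q = Er P (fun w => q w * cst 1 w) by apply: eq_Er => w; rewrite mulr1.
  under eq_Er do rewrite mulrC.
  rewrite !Er_discretize_mul //; last exact: bounded_measurable_cst.
  rewrite mulr_sumr.
  apply: eq_bigr => i _; rewrite mulrCA; congr (_ * _).
  have mC := measurable_preimage_cell n N i mW.
  rewrite Er_indicI// setIC EW; last exact: measurable_cell.
  rewrite fineM ?fin_num_measure//.
  by under eq_Er do rewrite mulr1; rewrite Er_indic.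
have errE : `|Er P (fun w => \1_E w * W w) - Er P (fun w => \1_E w * q w)| <= n.+1%:R^-1.
  apply: normr_ErB_le => [||w]; try exact: bounded_measurableM.
  rewrite -mulrBr normrM indicE distrC.
  by case: (_ \in _); rewrite ?normr1 ?mul1r ?discretize_err// normr0 mul0r.
have err : `|Er P q - Er P W| <= n.+1%:R^-1.
  by apply: normr_ErB_le => // w; exact: discretize_err.
rewrite Eq in errE; rewrite -[Er P (fun w => _)](subrK (fine (P E) * Er P q)).
rewrite -addrA -mulrBr.
apply: le_trans (ler_normD _ _) _; rewrite mulr2n mulrDl mul1r lerD// normrM ger0_norm//.
by rewrite -[X in _ <= X]mul1r ler_pM.
Qed.


End independence.

Section products_with_independent_noise.
Context d (T : measurableType d) (R : realType) (P : probability T R).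
Variables (X Y : nat -> {RV P >-> R}) (M : R).
Hypothesis XM : forall t w, `|X t w| <= M.
Hypothesis YM : forall t w, `|Y t w| <= M.
Hypothesis Y0 : forall t, ('E_P[Y t] = 0)%E.
Hypothesis Yindep : mutually_independent P (fun t => Y t : T -> R).
Hypothesis XYindep : independent_seqs P (fun t => X t : T -> R) (fun t => Y t : T -> R).

Let bX t : bounded_measurable (X t).
Proof. by split; [exact: measurable_funPT | exists M]. Qed.

Let bY t : bounded_measurable (Y t).
Proof. by split; [exact: measurable_funPT | exists M]. Qed.

#[local] Hint Resolve bX bY : core.

Lemma independent_rectangle a b (B1 B2 B3 C : set R) : a != b ->
  measurable B1 -> measurable B2 -> measurable B3 -> measurable C ->
  let E := X a @^-1` B1 `&` X b @^-1` B2 `&` Y a @^-1` B3 in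
  P (E `&` Y b @^-1` C) = (P E * P (Y b @^-1` C))%E.
Proof.
move=> ab mB1 mB2 mB3 mC E.
pose B i := if i == a then B1 else B2.
pose C' i := if i == a then B3 else C.
have mB i : measurable (B i) by rewrite /B; case: ifP.
have mC' i : measurable (C' i) by rewrite /C'; case: ifP.
have XYab := XYindep [:: a; b] [:: a; b] mB mC'.
have XYa := XYindep [:: a; b] [:: a] mB mC'.
have uab : uniq [:: a; b] by rewrite /= inE ab.
have Yab := Yindep uab mC'.
have ba : (b == a) = false by rewrite eq_sym (negbTE ab).
rewrite /E -setIA; move: XYab XYa Yab.
by rewrite /= !big_cons !big_nil !setIT /B /C' eqxx ba /= mule1 => -> -> ->; rewrite muleA.
Qed.

Lemma Er_discretized_cross_eq0 a b n N : a != b ->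
  Er P (fun w => discretize n N (X a) w *
                 (discretize n N (X b) w * (discretize n N (Y a) w * Y b w))) = 0.
Proof.
(* Expanding the three step functions leaves the expectations of [\1_E * Y b]
   over rectangles [E] in [(X a, X b, Y a)], which vanish by independence. *)
move=> ab; have bq (V : {RV P >-> R}) : bounded_measurable (discretize n N V).
  exact/bounded_measurable_discretize/measurable_funPT.
have mC (V : {RV P >-> R}) i : measurable (V @^-1` cell n N i).
  exact: measurable_funPTI (measurable_cell n N i).
apply: Er_discretize_mul_eq0 => [||i]; first exact: measurable_funPT.
  by do 2 apply: bounded_measurableM => //.
under eq_Er do rewrite mulrCA.
apply: Er_discretize_mul_eq0 => [||j]; first exact: measurable_funPT.
  apply: bounded_measurableM; first exact: bounded_measurable_indic.
  exact: bounded_measurableM.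
under eq_Er => w do rewrite [\1_(X a @^-1` _) w * _]mulrCA [\1_(X b @^-1` _) w * _]mulrCA.
apply: Er_discretize_mul_eq0 => [||k]; first exact: measurable_funPT.
  by do 2 (apply: bounded_measurableM; first exact: bounded_measurable_indic).
pose E := X a @^-1` cell n N i `&` X b @^-1` cell n N j `&` Y a @^-1` cell n N k.
rewrite (_ : (fun w => _) = (fun w => \1_E w * Y b w)); last first.
  by apply/funext => w; rewrite !indicI /=; ring.
rewrite Er_indic_mul_indep ?/Er ?Y0 ?mulr0//.
  by apply: measurableI; first apply: measurableI.
by move=> C mC'; apply: independent_rectangle => //; exact: measurable_cell.
Qed.

Lemma Er_cross_eq0 a b : a != b ->
  Er P (fun w => (X a w * Y a w) * (X b w * Y b w)) = 0.
Proof.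
move=> ab; have [N MN] : exists N : nat, M < N%:R.
  by have [N _ hN] := nbhs_infty_gtr M; exists N; exact: hN N (leqnn N).
have XN t w : `|X t w| < N%:R := le_lt_trans (XM t w) MN.
have YN t w : `|Y t w| < N%:R := le_lt_trans (YM t w) MN.
have bq n (V : {RV P >-> R}) : bounded_measurable (discretize n N V).
  exact/bounded_measurable_discretize/measurable_funPT.
apply: (@normr_le_harmonic_eq0 _ _ (3 * (N%:R * N%:R * N%:R))) => n.
rewrite -[Er P _]subr0 -(Er_discretized_cross_eq0 n N ab); apply: normr_ErB_le => [||w].
- by apply: bounded_measurableM; apply: bounded_measurableM.
- apply: bounded_measurableM => //; apply: bounded_measurableM => //.
  exact: bounded_measurableM.
set qXa := discretize n N (X a) w; set qXb := discretize n N (X b) w.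
set qYa := discretize n N (Y a) w.
rewrite (_ : _ - _ = (X a w * X b w * Y a w - qXa * qXb * qYa) * Y b w); last by ring.
rewrite normrM (_ : _ / _ = 3 * (N%:R * N%:R * n.+1%:R^-1) * N%:R); last by ring.
apply: ler_pM => //; last exact: ltW.
apply: normr_mul3B_le; rewrite 1?distrC;
  by [apply: ltW | apply: discretize_bound | apply: discretize_err].
Qed.

Let S n w := \sum_(t < n) X t w * Y t w.

Let bZ t : bounded_measurable (fun w => X t w * Y t w).
Proof. exact: bounded_measurableM. Qed.

Let bS n : bounded_measurable (S n).
Proof. exact: bounded_measurable_sum. Qed.

Let normr_Z_le t w : `|X t w * Y t w| <= M ^+ 2.
Proof. by rewrite normrM expr2 ler_pM. Qed.

Lemma Er_partial_sum_sqr_le n : Er P (fun w => S n w ^+ 2) <= n%:R * M ^+ 4.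
Proof.
have -> : (fun w => S n w ^+ 2) =
          (fun w => \sum_(a < n) \sum_(b < n) (X a w * Y a w) * (X b w * Y b w)).
  by apply/funext => w; rewrite expr2 mulr_suml; apply: eq_bigr => a _; rewrite mulr_sumr.
rewrite Er_sum => [|a]; last first.
  by apply: bounded_measurable_sum => b; exact: bounded_measurableM.
rewrite mulr_natl -[X in _ *+ X]card_ord -sumr_const; apply: ler_sum => a _.
rewrite Er_sum => [|b]; last exact: bounded_measurableM.
rewrite (bigD1 a) //= big1 ?addr0 => [|b ba]; last by apply: Er_cross_eq0; rewrite eq_sym.
apply: le_trans (ler_norm _) _.
apply: normr_Er_le => [|w]; first exact: bounded_measurableM.
by rewrite normrM (_ : 4 = 2 + 2)%N // exprD ler_pM.
Qed.

Let deviation j k := [set w | (k.+1 ^ 2)%:R / j.+1%:R < `|S (k.+1 ^ 2) w|].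

Let measurable_deviation j k : measurable (deviation j k).
Proof. exact: measurable_normr_gt (bS _).1. Qed.

Lemma P_deviation_le j k :
  (P (deviation j k) <= ((M ^+ 4 * j.+1%:R ^+ 2) / (k.+1 ^ 2)%:R)%:E)%E.
Proof.
rewrite -[P _]fineK ?fin_num_measure // lee_fin.
set p := fine _; set m : R := (k.+1 ^ 2)%:R; set J : R := j.+1%:R.
have m0 : 0 < m by rewrite ltr0n expn_gt0.
have J0 : 0 < J by rewrite ltr0n.
have := le_trans (Er_sqr_tail P (bS (k.+1 ^ 2)) (divr_gt0 m0 J0)) (Er_partial_sum_sqr_le _).
rewrite -/p -/m => tail; rewrite ler_pdivlMr //.
have -> : p * m = p * (m / J) ^+ 2 * (J ^+ 2 / m) by field; rewrite ?gt_eqF.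
apply: le_trans (ler_wpM2r _ tail) _; first by rewrite divr_ge0 ?exprn_ge0 ?ltW.
by rewrite le_eqVlt; apply/orP; left; apply/eqP; field; rewrite gt_eqF.
Qed.

Lemma P_limsup_deviation j : P (lim_sup_set (deviation j)) = 0%E.
Proof.
have C0 : 0 <= M ^+ 4 * j.+1%:R ^+ 2 by rewrite mulr_ge0 ?exprn_even_ge0.
apply: lim_sup_set_cvg0 => //; apply: le_lt_trans (nneseries_inv_sqr_lty C0).
by apply: lee_nneseries => // k _; exact: P_deviation_le.
Qed.

Lemma cvg_square_means_off_limsup w :
  ~ (\bigcup_j lim_sup_set (deviation j)) w ->
  (fun k => (k.+1 ^ 2)%:R^-1 * S (k.+1 ^ 2) w) @ \oo --> 0.
Proof.
move=> nU; apply/cvgrPdist_le => e e0.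
have [j je] : exists j : nat, j.+1%:R^-1 < e.
  by have [j _ hj] := near_infty_natSinv_lt (PosNum e0); exists j; exact: hj j (leqnn j).
apply: contrapT => far; apply: nU; exists j => // n _.
apply: contrapT => none; apply: far; exists n => // k /= nk.
rewrite leNgt; apply/negP => hlt; apply: none; exists k => //=.
have m0 : 0 < (k.+1 ^ 2)%:R :> R by rewrite ltr0n expn_gt0.
rewrite sub0r normrN normrM ger0_norm ?invr_ge0 ?ltW// ltr_pdivlMl// in hlt.
by apply: le_lt_trans hlt; rewrite ler_pM2l// ltW.
Qed.

Lemma ae_cvg_mean_mul :
  {ae P, forall w, (fun k => k.+1%:R^-1 * \sum_(t < k.+1) (X t w * Y t w)) @ \oo --> 0}.
Proof.
apply: (@negligibleS _ _ _ _ (\bigcup_j lim_sup_set (deviation j))); last first.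
  apply: negligible_bigcup => j; exists (lim_sup_set (deviation j)).
  split => //; last exact: P_limsup_deviation.
  apply: bigcap_measurable => // n _; exact: bigcup_measurable.
move=> w /= ncvg; apply: contrapT => /cvg_square_means_off_limsup; apply: contra_not ncvg.
apply: cvg_mean_from_squares (M ^+ 2) (S^~ w) _ => n.
by rewrite /S big_ord_recr /= addrAC subrr add0r.
Qed.

End products_with_independent_noise.

Unset Implicit Arguments.

Theorem mainTheorem1 (d : measure_display) (T : measurableType d) (R : realType)
  (P : probability T R) (X Y : nat -> {RV P >-> R})
  (hXb : exists M : R, forall (t : nat) (w : T), `|X t w| <= M)
  (hYb : exists M : R, forall (t : nat) (w : T), `|Y t w| <= M)
  (hY0 : forall t : nat, ('E_P[Y t] = 0)%E)
  (hYind : mutually_independent P (fun t => Y t : T -> R))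
  (hYid : identically_distributed P (fun t => Y t : T -> R))
  (hXY : independent_seqs P (fun t => X t : T -> R) (fun t => Y t : T -> R)) :
  {ae P, forall w : T,
    (fun k : nat => k.+1%:R^-1 * \sum_(t < k.+1) (X t w * Y t w)) @ \oo --> (0 : R)}.
Proof.
have [Mx hMx] := hXb; have [My hMy] := hYb.
have hXM t w : `|X t w| <= Num.max Mx My by rewrite le_max hMx.
have hYM t w : `|Y t w| <= Num.max Mx My by rewrite le_max hMy orbT.
exact: ae_cvg_mean_mul hXM hYM hY0 hYind hXY.
Qed.
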